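(* Let $\alpha,\beta\ge1$. (i) For every $2\times2$ matrix $A$ with strictly positive entries and $R(A)=\alpha$, there exists a $2\times 2$ matrix $B$ with strictly positive entries and $R(B)=\beta$ such that $R(AB)=\Phi(\alpha,\beta)$. (ii) For every $2\times2$ matrix $B$ with strictly positive entries and $R(B)=\beta$, there exists a $2\times2$ matrix $A$ with strictly positive entries and $R(A)=\alpha$ such that $R(AB)=\Phi(\alpha,\beta)$.
   Context: For a $2\times2$ matrix $A=(a_{ij})$ with strictly positive entries, $F(A)=\frac{a_{11}a_{22}}{a_{12}a_{21}}$ and the distortion is $R(A)=\max\{F(A),1/F(A)\}$. The envelope function is $\Phi(\alpha,\beta)=\left(\frac{1+\sqrt{\alpha\beta}}{\sqrt{\alpha}+\sqrt{\beta}}\right)^2$. *)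

From mathcomp Require Import all_boot all_order all_algebra.
From mathcomp Require Import reals.
Set Implicit Arguments. Unset Strict Implicit. Unset Printing Implicit Defensive.
Import Order.TTheory GRing.Theory Num.Theory.
Local Open Scope ring_scope.

Section Distortion.
Variable R : realType.

Definition posmx (A : 'M[R]_2) : Prop := forall i j : 'I_2, 0 < A i j.

Definition Fcr (A : 'M[R]_2) : R :=
  (A 0 0 * A 1 1) / (A 0 1 * A 1 0).

Definition distortion (A : 'M[R]_2) : R := Num.max (Fcr A) (Fcr A)^-1.

Definition Phi (a b : R) : R :=
  ((1 + Num.sqrt (a * b)) / (Num.sqrt a + Num.sqrt b)) ^+ 2.
End Distortion.

From mathcomp Require Import all_boot all_order all_algebra.
From mathcomp Require Import reals.
From mathcomp Require Import ring lra.
Import Order.TTheory GRing.Theory Num.Theory.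
Local Open Scope ring_scope.

(* The cross ratio F is invariant under positive diagonal rescaling on either
   side and under transposition.  Writing A = D N D' with D, D' positive
   diagonal and N = [[1,1],[1,F(A)]], the choice B = D'^-1 C gives F(B) = F(C)
   and F(A B) = F(N C), so C only has to be chosen against N.  With alpha = a^2
   and beta = b^2, C = [[ab,a],[1,b]] (or [[1,b],[ab,a]] when F(A) = 1/alpha)
   has F(C) = beta^(+-1) and F(N C) = ((1 + ab)/(a + b))^2 = Phi(alpha,beta).
   Part (ii) is part (i) for the transposes, Phi being symmetric. *)

Set Implicit Arguments. Unset Strict Implicit.

Section TwoByTwo.
Variable R : realType.
Implicit Types (A B C M : 'M[R]_2) (a b r x y z w : R).

Lemma ord2P (i : 'I_2) : i = 0 \/ i = 1.
Proof. by case: i => [[|[|//]]] hi; [left | right]; apply/val_inj. Qed.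

Definition mx2 x y z w : 'M[R]_2 :=
  \matrix_(i < 2, j < 2) if i == 0 then (if j == 0 then x else y)
                         else (if j == 0 then z else w).

Definition normal_mx r : 'M[R]_2 := mx2 1 1 1 r.

Lemma posmx_mx2 x y z w :
  0 < x -> 0 < y -> 0 < z -> 0 < w -> posmx (mx2 x y z w).
Proof. by move=> hx hy hz hw i j; rewrite mxE; case: (i == 0); case: (j == 0). Qed.

Lemma mulmx2E A B i j : (A *m B) i j = A i 0 * B 0 j + A i 1 * B 1 j.
Proof.
by rewrite mxE !big_ord_recl big_ord0 addr0; congr (_ + A i _ * B _ j); apply/val_inj.
Qed.

Lemma Fcr_mx2 x y z w : Fcr (mx2 x y z w) = x * w / (y * z).
Proof. by rewrite /Fcr !mxE. Qed.

Lemma Fcr_mx2_mul x y z w x' y' z' w' :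
  Fcr (mx2 x y z w *m mx2 x' y' z' w') =
  (x * x' + y * z') * (z * y' + w * w') / ((x * y' + y * w') * (z * x' + w * z')).
Proof. by rewrite /Fcr !mulmx2E !mxE. Qed.

Lemma Fcr_tr M : Fcr M^T = Fcr M.
Proof. by rewrite /Fcr !mxE [M 1 0 * _]mulrC. Qed.

Lemma posmx_tr M : posmx M -> posmx M^T.
Proof. by move=> hM i j; rewrite mxE. Qed.

Lemma distortion_tr M : distortion M^T = distortion M.
Proof. by rewrite /distortion Fcr_tr. Qed.

Lemma distortionP M r : 1 <= r ->
  distortion M = r <-> Fcr M = r \/ Fcr M = r^-1.
Proof.
move=> r1; have r0 : 0 < r by lra.
have rV1 : r^-1 <= r by apply: (le_trans _ r1); rewrite invf_le1.
rewrite /distortion; split.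
- by rewrite maxEle; case: ifP => _ <-; [right; rewrite invrK | left].
- by case=> ->; [rewrite max_l | rewrite invrK max_r].
Qed.

Lemma Fcr_diag_mul (d : 'rV[R]_2) M : d 0 0 != 0 -> d 0 1 != 0 ->
  Fcr (diag_mx d *m M) = Fcr M.
Proof.
have divKl u x z : u != 0 -> u * x / (u * z) = x / z.
  by move=> u0; rewrite invfM mulrACA mulfV // mul1r.
by move=> d0 d1; rewrite /Fcr !mul_diag_mx !mxE -mulf_div !divKl // mulf_div.
Qed.

Lemma posmx_diag_mul (d : 'rV[R]_2) M : (forall i, 0 < d 0 i) -> posmx M ->
  posmx (diag_mx d *m M).
Proof. by move=> hd hM i j; rewrite mul_diag_mx mxE mulr_gt0. Qed.

Lemma mul_mx_diag_normal A : posmx A ->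
  A *m diag_mx (\row_j (A 0 j)^-1) =
  diag_mx (\row_i (A i 0 / A 0 0)) *m normal_mx (Fcr A).
Proof.
move=> hA; have := hA 0 0; have := hA 0 1; have := hA 1 0.
move=> /lt0r_neq0 r0 /lt0r_neq0 q0 /lt0r_neq0 p0.
apply/matrixP => i j; rewrite mul_mx_diag mul_diag_mx !mxE /Fcr.
by case: (ord2P i) (ord2P j) => -> [] -> /=; field; rewrite ?p0 ?q0 ?r0.
Qed.

Definition phi a b := (1 + a * b) / (a + b).

Lemma PhiC a b : Phi a b = Phi b a.
Proof. by rewrite /Phi [a * b]mulrC [Num.sqrt a + _]addrC. Qed.

Lemma Phi_sqr a b : 0 <= a -> 0 <= b -> Phi (a ^+ 2) (b ^+ 2) = phi a b ^+ 2.
Proof. by move=> a0 b0; rewrite /Phi -exprMn !sqrtr_sqr !ger0_norm ?mulr_ge0. Qed.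

(* (1 + ab) - (a + b) = (a - 1)(b - 1) *)
Lemma phi_ge1 a b : 1 <= a -> 1 <= b -> 1 <= phi a b.
Proof. by move=> a1 b1; rewrite /phi ler_pdivlMr ?mul1r; nra. Qed.

Lemma extremal_factor_normal_mx a b f : 0 < a -> 0 < b -> f = a ^+ 2 \/ f = a ^- 2 ->
  exists C, [/\ posmx C, Fcr C = b ^+ 2 \/ Fcr C = b ^- 2 &
                Fcr (normal_mx f *m C) = phi a b ^+ 2].
Proof.
move=> a0 b0 [->|->].
- exists (mx2 (a * b) a 1 b); split; first by apply: posmx_mx2; rewrite ?mulr_gt0.
    by left; rewrite Fcr_mx2; field; apply: lt0r_neq0.
  rewrite Fcr_mx2_mul /phi; field.
  by rewrite !lt0r_neq0 ?addr_gt0 ?mulr_gt0.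
- exists (mx2 1 b (a * b) a); split; first by apply: posmx_mx2; rewrite ?mulr_gt0.
    by right; rewrite Fcr_mx2; field; rewrite !lt0r_neq0.
  rewrite Fcr_mx2_mul /phi; field.
  by rewrite !lt0r_neq0 ?addr_gt0 ?mulr_gt0.
Qed.

Lemma ge1_sqr r : 1 <= r -> exists2 a, 1 <= a & r = a ^+ 2.
Proof.
move=> r1; exists (Num.sqrt r); last by rewrite sqr_sqrtr //; lra.
by rewrite -sqrtr1 ler_sqrt; lra.
Qed.

Lemma extremal_right_factor alpha beta A : 1 <= alpha -> 1 <= beta ->
  posmx A -> distortion A = alpha ->
  exists B, [/\ posmx B, distortion B = beta &
                 distortion (A *m B) = Phi alpha beta].
Proof.
move=> /ge1_sqr[a a1 ->] /ge1_sqr[b b1 ->] hA.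
move=> /(distortionP _ (exprn_ege1 2 a1)) FA.
have a0 : 0 < a by lra.
have b0 : 0 < b by lra.
have [C [posC FC FNC]] := extremal_factor_normal_mx a0 b0 FA.
have A_neq0 i j : A i j != 0 by apply: lt0r_neq0.
exists (diag_mx (\row_j (A 0 j)^-1) *m C); split.
- by apply: posmx_diag_mul => // i; rewrite mxE invr_gt0.
- by apply/distortionP; rewrite ?exprn_ege1 // Fcr_diag_mul // mxE invr_neq0.
- rewrite Phi_sqr ?ltW //; apply/distortionP; first by rewrite exprn_ege1 ?phi_ge1.
  left; rewrite mulmxA mul_mx_diag_normal // -mulmxA Fcr_diag_mul //.
  all: by rewrite mxE mulf_neq0 ?invr_neq0.
Qed.

End TwoByTwo.

Theorem mainTheorem3 (R : realType) (alpha beta : R) :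
  1 <= alpha -> 1 <= beta ->
  (forall A : 'M[R]_2, posmx A -> distortion A = alpha ->
     exists B : 'M[R]_2, [/\ posmx B, distortion B = beta &
                            distortion (A *m B) = Phi alpha beta]) /\
  (forall B : 'M[R]_2, posmx B -> distortion B = beta ->
     exists A : 'M[R]_2, [/\ posmx A, distortion A = alpha &
                            distortion (A *m B) = Phi alpha beta]).
Proof.
move=> alpha1 beta1; split=> [A | B] posA distA.
  exact: extremal_right_factor.
have [C [posC distC distBC]] :=
  extremal_right_factor beta1 alpha1 (posmx_tr posA)
    (etrans (distortion_tr B) distA).
exists C^T; split; first exact: posmx_tr.
  by rewrite distortion_tr.
by rewrite -distortion_tr trmx_mul trmxK PhiC.
Qed.
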